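(* Let $f\in\ell^2(V,w)$ be nonnegative and not identically zero with $\mathrm{vol}(\mathrm{supp}(f))\le\mathrm{vol}(V)/2$, and let $a>b\ge0$ and $I=(b,a]$. If $\phi(f)\,\mathrm{vol}_f(a)+\mathrm{vol}_f(I)>0$, then $$\mathcal E_f(I)\ge\frac{\phi(f)^2\,\mathrm{vol}_f(a)^2\,\mathrm{len}(I)^2}{\phi(f)\,\mathrm{vol}_f(a)+\mathrm{vol}_f(I)}.$$
   Context: $G=(V,E,w)$ finite undirected, positive edge weights, $w(v)=\sum_{u\sim v}w(u,v)\ge1$, $\mathrm{vol}(S)=\sum_{v\in S}w(v)$, $\mathrm{supp}(f)=\{v:f(v)\ne0\}$. Conductance $\phi(S)=w(E(S,\overline S))/\min\{\mathrm{vol}(S),\mathrm{vol}(\overline S)\}$ for $\emptyset\ne S\subsetneq V$; $V_f(t)=\{v:f(v)\ge t\}$; $\phi(f)=\min\{\phi(V_f(t)):\emptyset\ne V_f(t)\ne V\}$. For reals $t_1,t_2$, $[t_1,t_2]$ denotes the half-open interval $(\min\{t_1,t_2\},\max\{t_1,t_2\}]$, and $\mathrm{len}$ denotes length. $\mathrm{vol}_f(a)=\mathrm{vol}(\{v:f(v)\ge a\})$ and, for an interval $I$, $\mathrm{vol}_f(I)=\mathrm{vol}(\{v:f(v)\in I\})$. The energy of $f$ restricted to $I$ is $\mathcal E_f(I)=\sum_{\{u,v\}\in E}w(u,v)\,\mathrm{len}(I\cap[f(u),f(v)])^2$. *)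

(* Weighted graph on a finite vertex type V with real weights
   in an arbitrary real field R; w u v = weight of edge {u,v} (0 if no edge). *)
From HB Require Import structures.
From mathcomp Require Import all_boot all_order all_algebra.
Set Implicit Arguments. Unset Strict Implicit. Unset Printing Implicit Defensive.
Import Order.TTheory GRing.Theory Num.Theory.
Local Open Scope ring_scope.

Section GraphDefs.
Variables (R : realFieldType) (V : finType).

Definition wdeg (w : V -> V -> R) (v : V) : R := \sum_(u : V) w u v.

Definition vol (w : V -> V -> R) (S : {set V}) : R := \sum_(v in S) wdeg w v.

Definition supp (f : V -> R) : {set V} := [set v | f v != 0].

Definition cut (w : V -> V -> R) (S : {set V}) : R :=
  \sum_(u in S) \sum_(v in ~: S) w u v.

Definition conductance (w : V -> V -> R) (S : {set V}) : R :=
  cut w S / Num.min (vol w S) (vol w (~: S)).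

Definition level (f : V -> R) (t : R) : {set V} := [set v | t <= f v].

(* phi(f) = min over thresholds t with V_f(t) nonempty and proper.  Every such
   level set equals V_f(f v) for some vertex v (and V_f(f v) is always
   nonempty), so the minimum ranges over vertices v with V_f(f v) <> V.
   The neutral element 1 is harmless: conductances are always <= 1, and the
   index set is nonempty whenever f is non-constant. *)
Definition phi_f (w : V -> V -> R) (f : V -> R) : R :=
  \big[Num.min/1]_(v : V | level f (f v) != setT) conductance w (level f (f v)).

Definition vol_ge (w : V -> V -> R) (f : V -> R) (a : R) : R := vol w (level f a).

Definition vol_int (w : V -> V -> R) (f : V -> R) (b a : R) : R :=
  vol w [set v | (b < f v) && (f v <= a)].

Definition hlen (l r : R) : R := Num.max 0 (r - l).

(* len( (b,a] ∩ [x,y] ) where [x,y] = (min x y, max x y] *)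
Definition len_cap (b a x y : R) : R :=
  hlen (Num.max b (Num.min x y)) (Num.min a (Num.max x y)).

(* E_f((b,a]) = sum over edges {u,v} of w(u,v) len(I ∩ [f u, f v])^2.
   Each unordered edge appears twice in the ordered double sum (w symmetric,
   no loops), hence the factor 1/2. *)
Definition energy (w : V -> V -> R) (f : V -> R) (b a : R) : R :=
  2^-1 * \sum_(u : V) \sum_(v : V) w u v * (len_cap b a (f u) (f v)) ^+ 2.

End GraphDefs.

From HB Require Import structures.
From mathcomp Require Import all_boot all_order all_algebra.
From mathcomp Require Import ring lra.
Import Order.TTheory GRing.Theory Num.Theory.
Local Open Scope ring_scope.

(* Let g be f projected onto [b, a]; the length len(I ∩ [f u, f v]) of an
   edge is |g u - g v|.  The proof has three ingredients.
   1. Co-area (coarea_lower): if every level set V_g(t), t in (b, a], has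
      cut >= K then sum_{u,v} w(u,v) |g u - g v| >= 2 K (a - b).  It is proved
      by induction on the number of values of g strictly inside (b, a),
      splitting g at one of them (dist_split_at).
   2. Isoperimetry (cut_level_lower): for t > 0, V_f(t) lies in supp(f), so
      its cut is >= phi(f) vol(V_f(t)) >= phi(f) vol_f(a) when t <= a.
   3. Completing the square edge by edge (edge_quadratic): for 0 <= al <= a-b,
      al len - al^2 (#endpoints in I) / 4 <= len^2; over all ordered pairs
      the endpoint counts add up to 2 vol_f(I) (energy_quadratic).
   A suitable choice of al (quadratic_family_bound) turns 1-3 into the
   claimed inequality, which is derived at the end of the file. *)

Section Interval.
Context {R : realFieldType}.
Implicit Types a b x y al : R.

Definition clamp b a x : R := Num.min a (Num.max b x).

Definition in_interval b a x : bool := (b < x) && (x <= a).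

Lemma len_cap_clamp b a x y : b < a ->
  len_cap b a x y = `|clamp b a x - clamp b a y|.
Proof.
move=> ba; wlog xy : x y / x <= y.
  move=> hw; case/orP: (le_total x y) => [|yx]; first exact: hw.
  by rewrite distrC -(hw y x yx) /len_cap (minC x) (maxC x).
rewrite /len_cap /hlen (min_l xy) (max_r xy) /clamp distrC ger0_norm.
  case: (leP b x); case: (leP b y); case: (leP a x); case: (leP a y) => *;
    rewrite ?(min_r (ltW ba)); first [rewrite max_r; lra | rewrite max_l; lra].
by rewrite subr_ge0 le_min2 ?le_max2.
Qed.

Lemma clamp_outside {b a x} : b < a -> ~~ in_interval b a x ->
  clamp b a x = b \/ clamp b a x = a.
Proof.
rewrite /clamp /in_interval negb_and -leNgt -ltNge => ba /orP[xb | ax].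
  by left; rewrite (max_l xb) (min_r (ltW ba)).
by right; rewrite (max_r (ltW (lt_trans ba ax))) (min_l (ltW ax)).
Qed.

Lemma dist_split_at x y (s : R) :
  `|x - y| = `|Num.min x s - Num.min y s| + `|Num.max x s - Num.max y s|.
Proof.
wlog yx : x y / y <= x.
  move=> hw; case/orP: (le_total y x) => h; first exact: hw.
  by rewrite distrC (hw y x h) (distrC (Num.min y s)) (distrC (Num.max y s)).
rewrite ger0_norm ?subr_ge0 //.
case: (lerP x s) => xs; case: (lerP y s) => ys.
- by rewrite subrr normr0 addr0 ger0_norm ?subr_ge0.
- lra.
- rewrite !ger0_norm; lra.
- by rewrite subrr normr0 add0r ger0_norm ?subr_ge0.
Qed.

Lemma square_completion (l al s : R) : 1 <= s -> al * l - al ^+ 2 / 4%:R * s <= l ^+ 2.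
Proof.
move=> s1; have : 0 <= (l - al / 2%:R) ^+ 2 by apply: sqr_ge0.
have : al ^+ 2 / 4%:R <= al ^+ 2 / 4%:R * s by rewrite ler_peMr // divr_ge0 ?sqr_ge0.
nra.
Qed.

(* Pointwise inequality for one edge {x, y}, for every 0 <= al <= a - b:
   al len - al^2 (#endpoints in (b,a]) / 4 <= len^2.  When no endpoint lies in
   (b, a] the length is 0 or a - b, and al <= a - b suffices. *)
Lemma edge_quadratic b a x y al : b < a -> 0 <= al -> al <= a - b ->
  al * len_cap b a x y
    - al ^+ 2 / 4%:R * ((in_interval b a x)%:R + (in_interval b a y)%:R)
  <= len_cap b a x y ^+ 2.
Proof.
move=> ba al0 alL.
case ix: (in_interval b a x); case iy: (in_interval b a y);
  try by apply: square_completion; rewrite /= ?mulr1n ?mulr0n; lra.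
have dist_ab : `|a - b| = a - b by rewrite ger0_norm // subr_ge0 ltW.
rewrite /= mulr0n addr0 mulr0 subr0 len_cap_clamp //.
case: (clamp_outside ba (negbT ix)) => ->; case: (clamp_outside ba (negbT iy)) => ->;
  rewrite ?subrr ?normr0 ?mulr0 ?expr0n //.
- by rewrite distrC dist_ab; nra.
- by rewrite dist_ab; nra.
Qed.

End Interval.

(* The choice of al.  If S1 >= 2 K L and al S1 - al^2 D / 2 <= S2 for every
   al in [0, L], then S2 / 2 >= K^2 L^2 / (K + D): take al = 2KL / (2K + D),
   which lies in [0, L], and use (2K + D)^2 <= (4K + D)(K + D). *)
Lemma quadratic_family_bound {R : realFieldType} (K D L S1 S2 : R) :
  0 <= K -> 0 <= D -> 0 <= L -> 0 < K + D -> 2%:R * K * L <= S1 ->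
  (forall al, 0 <= al -> al <= L -> al * S1 - al ^+ 2 / 4%:R * (2%:R * D) <= S2) ->
  K ^+ 2 * L ^+ 2 / (K + D) <= 2^-1 * S2.
Proof.
move=> K0 D0 L0 KD0 hS1 hS2.
have s0 : 0 < 2%:R * K + D by lra.
pose al := 2%:R * K * L / (2%:R * K + D).
have al_def : 2%:R * K * L = al * (2%:R * K + D) by rewrite /al mulfVK ?gt_eqF.
have al0 : 0 <= al by rewrite /al divr_ge0 ?mulr_ge0 ?ler0n // ltW.
have alL : al <= L.
  rewrite /al ler_pdivrMr //; have : 0 <= L * D by exact: mulr_ge0.
  lra.
have S2_low : al ^+ 2 * (4%:R * K + D) <= 2%:R * S2.
  have := hS2 al al0 alL; have := ler_wpM2l al0 hS1.
  rewrite al_def; lra.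
have KL : K * L = al * (2%:R * K + D) / 2%:R by rewrite -al_def; field.
have sq_le : (2%:R * K + D) ^+ 2 <= (4%:R * K + D) * (K + D).
  have : 0 <= K * D by exact: mulr_ge0.
  rewrite !expr2; lra.
rewrite ler_pdivrMr // -exprMn KL.
have := ler_wpM2l (sqr_ge0 al) sq_le.
have := ler_wpM2r (ltW KD0) S2_low.
lra.
Qed.

Section Graph.
Context {R : realFieldType} {V : finType} {w : V -> V -> R}.
Hypothesis w_sym : forall u v, w u v = w v u.
Hypothesis w_nneg : forall u v, 0 <= w u v.
Hypothesis w_deg : forall v, 1 <= wdeg w v.

Lemma vol_ge0 (S : {set V}) : 0 <= vol w S.
Proof. by apply: sumr_ge0 => v _; apply: le_trans (w_deg v). Qed.

Lemma vol_sub {A B : {set V}} : A \subset B -> vol w A <= vol w B.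
Proof.
move=> AB; rewrite [vol w B](big_setID A) /= (setIidPr AB) lerDl.
exact: vol_ge0.
Qed.

Lemma vol_setC (S : {set V}) : vol w [set: V] = vol w S + vol w (~: S).
Proof. by rewrite /vol (big_setID S) /= setTI setTD. Qed.

Lemma cut_ge0 (S : {set V}) : 0 <= cut w S.
Proof. by apply: sumr_ge0 => u _; apply: sumr_ge0. Qed.

Lemma phi_f_ge0 (f : V -> R) : 0 <= phi_f w f.
Proof.
apply: (big_ind (fun x => 0 <= x)) => // [x y x0 y0 | v _].
  by rewrite le_min x0 y0.
by rewrite divr_ge0 ?cut_ge0 // le_min !vol_ge0.
Qed.

Lemma sum_weight_indicator (S : {set V}) :
  \sum_u \sum_v w u v * (v \in S)%:R = vol w S.
Proof.
rewrite exchange_big /vol [RHS]big_mkcond /=; apply: eq_bigr => v _.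
by rewrite -mulr_suml; case: (v \in S); rewrite ?mulr1 ?mulr0.
Qed.

Lemma crossing_le_total (F : V -> V -> R) (L : {set V}) :
  (forall u v, 0 <= F u v) ->
  \sum_(u in L) \sum_(v in ~: L) F u v + \sum_(u in ~: L) \sum_(v in L) F u v
    <= \sum_u \sum_v F u v.
Proof.
move=> F0; rewrite [X in _ <= X](bigID (mem L)) /=.
under [X in _ <= _ + X]eq_bigl do rewrite -in_setC.
apply: lerD; apply: ler_sum => u _; rewrite [X in _ <= X](bigID (mem L)) /=.
  by under [X in _ <= _ + X]eq_bigl do rewrite -in_setC; rewrite lerDr sumr_ge0.
by rewrite lerDl sumr_ge0.
Qed.

Lemma two_valued_variation (g : V -> R) (b c : R) :
  b < c -> (forall v, b <= g v <= c) -> (forall v, ~~ (b < g v < c)) ->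
  2%:R * cut w (level g c) * (c - b) <= \sum_u \sum_v w u v * `|g u - g v|.
Proof.
move=> bc gbc gout; set L := level g c.
have gL v : v \in L -> g v = c.
  by rewrite inE => cg; have /andP[] := gbc v; lra.
have gNL v : v \in ~: L -> g v = b.
  rewrite !inE -ltNge => gc; have /andP[] := gbc v; have := gout v.
  by rewrite gc andbT -leNgt; lra.
have wg0 u v : 0 <= w u v * `|g u - g v| by rewrite mulr_ge0.
apply: le_trans (crossing_le_total _ L wg0).
have -> : \sum_(u in L) \sum_(v in ~: L) w u v * `|g u - g v| = cut w L * (c - b).
  rewrite /cut mulr_suml; apply: eq_bigr => u uL; rewrite mulr_suml.
  by apply: eq_bigr => v vL; rewrite (gL u) // (gNL v) // ger0_norm // subr_ge0 ltW.
have -> : \sum_(u in ~: L) \sum_(v in L) w u v * `|g u - g v| = cut w L * (c - b).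
  rewrite /cut exchange_big mulr_suml; apply: eq_bigr => v vL; rewrite mulr_suml.
  apply: eq_bigr => u uL.
  by rewrite w_sym (gL v) // (gNL u) // distrC ger0_norm // subr_ge0 ltW.
lra.
Qed.

(* Discrete co-area inequality: if every level set V_g(t), t in (b, c], has
   cut at least K, the total variation of g : V -> [b, c] is >= 2 K (c - b).
   Induction on the number of values strictly between b and c: splitting g
   at such a value g z yields two functions with fewer interior values. *)
Lemma coarea_lower (g : V -> R) (b c K : R) :
  b < c -> (forall v, b <= g v <= c) ->
  (forall t, b < t -> t <= c -> K <= cut w (level g t)) ->
  2%:R * K * (c - b) <= \sum_u \sum_v w u v * `|g u - g v|.
Proof.
have [n] := ubnP #|[set v | b < g v < c]|.
elim: n g b c => // n IH g b c card_lt bc gbc hK.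
case: (pickP [pred v | b < g v < c]) => [z /andP[bz zc] | gout]; last first.
  apply: le_trans (two_valued_variation _ _ _ bc gbc (fun v => negbT (gout v))).
  apply: ler_wpM2r; first by rewrite subr_ge0 ltW.
  by apply: ler_wpM2l => //; exact: hK.
set S := [set v | b < g v < c] in card_lt.
have zS : z \in S by rewrite inE bz zc.
have fewer (A : {set V}) : A \subset S :\ z -> (#|A| < n)%N.
  move=> AS; rewrite ltnS in card_lt; apply: leq_trans card_lt.
  exact/proper_card/(sub_proper_trans AS)/properD1.
pose lo v := Num.min (g v) (g z); pose hi v := Num.max (g v) (g z).
have -> : \sum_u \sum_v w u v * `|g u - g v| =
    \sum_u \sum_v w u v * `|lo u - lo v| + \sum_u \sum_v w u v * `|hi u - hi v|.
  rewrite -big_split; apply: eq_bigr => u _; rewrite -big_split.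
  by apply: eq_bigr => v _; rewrite (dist_split_at (g u) (g v) (g z)) mulrDr.
have -> : 2%:R * K * (c - b) = 2%:R * K * (g z - b) + 2%:R * K * (c - g z) by ring.
apply: lerD; [apply: (IH lo) | apply: (IH hi)] => //.
- apply: fewer; apply/subsetP => v; rewrite !inE /lo lt_min gt_min ltxx orbF.
  move=> /andP[/andP[bv _] vz]; rewrite bv (lt_trans vz zc) !andbT.
  by apply: contraTneq vz => ->; rewrite ltxx.
- move=> v; have /andP[bv _] := gbc v.
  by rewrite /lo le_min ge_min lexx orbT bv (ltW bz).
- move=> t bt tz; have -> : level lo t = level g t.
    by apply/setP => v; rewrite !inE le_min tz andbT.
  exact: hK bt (le_trans tz (ltW zc)).
- apply: fewer; apply/subsetP => v; rewrite !inE /hi lt_max gt_max ltxx orbF.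
  move=> /andP[zv /andP[vc _]]; rewrite vc (lt_trans bz zv) !andbT.
  by apply: contraTneq zv => ->; rewrite ltxx.
- move=> v; have /andP[_ vc] := gbc v.
  by rewrite /hi le_max ge_max lexx orbT vc (ltW zc).
- move=> t zt tc; have -> : level hi t = level g t.
    by apply/setP => v; rewrite !inE le_max (leNgt t (g z)) zt orbF.
  exact: hK (lt_trans bz zt) tc.
Qed.

Lemma phi_f_le_conductance (f : V -> R) (m : V) :
  level f (f m) != setT -> phi_f w f <= conductance w (level f (f m)).
Proof. exact: (bigmin_le_cond _ (fun v => conductance w (level f (f v)))). Qed.

Lemma level_at_vertex (f : V -> R) (t : R) :
  level f t != set0 -> exists m, level f (f m) = level f t.
Proof.
case/set0Pn=> z; rewrite inE => tz.
have [m tm m_min] := arg_minP (P := fun v => t <= f v) f tz.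
exists m; apply/setP => v; rewrite !inE; apply/idP/idP; last exact: m_min.
exact: le_trans.
Qed.

Lemma conductance_vol_le_cut {S : {set V}} :
  vol w S <= vol w (~: S) -> conductance w S * vol w S <= cut w S.
Proof.
move=> small; rewrite /conductance (min_l small).
have [->|S_pos] := eqVneq (vol w S) 0; first by rewrite mulr0 cut_ge0.
by rewrite mulfVK.
Qed.

(* The isoperimetric input: for t > 0, every level set V_f(t) lies in
   supp(f), hence has at most half the volume, so its cut is at least
   phi(f) vol(V_f(t)). *)
Lemma cut_level_lower (f : V -> R) (t : R) :
  vol w (supp f) <= vol w [set: V] / 2%:R -> 0 < t ->
  phi_f w f * vol w (level f t) <= cut w (level f t).
Proof.
move=> f_supp t0; set S := level f t.
have [S0 | /level_at_vertex [m Sm]] := eqVneq S set0.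
  by rewrite S0 /vol big_set0 mulr0 cut_ge0.
have S_supp : S \subset supp f.
  apply/subsetP => v; rewrite !inE => tv; apply: contraTneq t0 => fv0.
  by rewrite -leNgt -fv0.
have small : vol w S <= vol w (~: S).
  have := vol_setC S; have := le_trans (vol_sub S_supp) f_supp; lra.
have S_proper : S != setT.
  apply: contraTneq small => ->; rewrite setCT -ltNge [vol w set0]big_set0.
  have := vol_sub (subsetT [set m]); rewrite [X in X <= _ -> _]big_set1.
  have := w_deg m; lra.
have phi_le : phi_f w f <= conductance w S.
  by move: S_proper; rewrite /S -Sm; exact: phi_f_le_conductance.
exact: le_trans (ler_wpM2r (vol_ge0 S) phi_le) (conductance_vol_le_cut small).
Qed.

(* Co-area applied to the projection of f onto [b, a], whose level sets in
   (b, a] are those of f: the total length of (b,a] covered by the edges. *)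
Lemma len_cap_coarea (f : V -> R) (b a K : R) : b < a ->
  (forall t, b < t -> t <= a -> K <= cut w (level f t)) ->
  2%:R * K * (a - b) <= \sum_u \sum_v w u v * len_cap b a (f u) (f v).
Proof.
move=> ba hK.
under eq_bigr do under eq_bigr do rewrite len_cap_clamp //.
apply: (coarea_lower (fun v => clamp b a (f v))) => // [v | t bt ta].
  by rewrite /clamp le_min ge_min lexx (ltW ba) le_max lexx.
have -> : level (fun v => clamp b a (f v)) t = level f t.
  by apply/setP => v; rewrite !inE /clamp le_min ta le_max (leNgt t b) bt.
exact: hK.
Qed.

(* Summing edge_quadratic over all ordered pairs: each vertex of (b, a] is
   counted with its degree from both sides, i.e. 2 vol_f((b,a]) in total. *)
Lemma energy_quadratic (f : V -> R) (b a al : R) : b < a -> 0 <= al -> al <= a - b ->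
  al * \sum_u \sum_v w u v * len_cap b a (f u) (f v)
    - al ^+ 2 / 4%:R * (2%:R * vol_int w f b a)
  <= \sum_u \sum_v w u v * len_cap b a (f u) (f v) ^+ 2.
Proof.
move=> ba al0 alL; set I := [set v | in_interval b a (f v)].
have head_count : \sum_u \sum_v w u v * (in_interval b a (f v))%:R = vol_int w f b a.
  rewrite (_ : vol_int w f b a = vol w I) // -(sum_weight_indicator I).
  by under [RHS]eq_bigr do under eq_bigr do rewrite inE.
have tail_count : \sum_u \sum_v w u v * (in_interval b a (f u))%:R = vol_int w f b a.
  rewrite -head_count exchange_big; apply: eq_bigr => u _; apply: eq_bigr => v _.
  by rewrite w_sym.
have -> : 2%:R * vol_int w f b a = \sum_u \sum_v
    w u v * ((in_interval b a (f u))%:R + (in_interval b a (f v))%:R).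
  rewrite mulr_natl mulr2n -[X in X + _]tail_count -[X in _ + X]head_count -big_split.
  by apply: eq_bigr => u _; rewrite -big_split; apply: eq_bigr => v _; rewrite mulrDr.
rewrite !mulr_sumr -sumrB; apply: ler_sum => u _; rewrite !mulr_sumr -sumrB.
apply: ler_sum => v _; rewrite mulrCA (mulrCA _ (w u v)) -mulrBr.
by apply: ler_wpM2l => //; exact: edge_quadratic.
Qed.

End Graph.

Theorem mainTheorem6 (R : realFieldType) (V : finType) (w : V -> V -> R)
  (w_sym : forall u v, w u v = w v u)
  (w_nneg : forall u v, 0 <= w u v)
  (w_noloop : forall v, w v v = 0)
  (w_deg : forall v, 1 <= wdeg w v)
  (f : V -> R)
  (f_nneg : forall v, 0 <= f v)
  (f_nz : exists v, f v != 0)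
  (f_supp : vol w (supp f) <= vol w [set: V] / 2%:R)
  (a b : R) (hba : b < a) (hb : 0 <= b)
  (hpos : 0 < phi_f w f * vol_ge w f a + vol_int w f b a) :
  energy w f b a >=
    (phi_f w f) ^+ 2 * (vol_ge w f a) ^+ 2 * (a - b) ^+ 2
      / (phi_f w f * vol_ge w f a + vol_int w f b a).
Proof.
rewrite /energy -exprMn.
pose covered := \sum_u \sum_v w u v * len_cap b a (f u) (f v).
apply: (quadratic_family_bound _ _ _ covered) => //.
- exact: mulr_ge0 (phi_f_ge0 w_nneg w_deg f) (vol_ge0 w_deg _).
- exact: vol_ge0 w_deg _.
- by rewrite subr_ge0 ltW.
- apply: len_cap_coarea => // t bt ta.
  apply: le_trans (cut_level_lower w_nneg w_deg f t f_supp (le_lt_trans hb bt)).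
  apply: ler_wpM2l; first exact: phi_f_ge0.
  by apply: vol_sub => //; apply/subsetP => v; rewrite !inE; exact: le_trans.
- by move=> al al0 alL; exact: energy_quadratic.
Qed.
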